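(* Let $a,b\ge0$ be integers, $c\in\mathbb Z$ and $t\ge0$ an integer. (1) If $a+b\ge1$, then $F(a,b,c,t)=F(b,a,-c,t)$. (2) If $b\ge1$, then $F(a,b,c,t)=F(a+1,b-1,c+t,t)$. (3) If $a+b\ge1$, then $F(a+1,b,0,t)=\sum_{i=0}^tF(a,b,-i,t)$.
   Context: For integers $a,b\ge0$ with $a+b\ge1$, $c\in\mathbb Z$ and $t\ge0$, $$F(a,b,c,t)=\sum_{j=0}^{a+b}(-1)^j\binom{a+b}{j}\binom{(t+1)(b-j)+a+c-1}{a+b-1},$$ with the conventions $\binom00=1$ and $\binom NK=0$ whenever $K<0$ or $N<K$ (for any integers $N,K$). *)

From mathcomp Require Import all_boot all_order all_algebra.
Set Implicit Arguments. Unset Strict Implicit. Unset Printing Implicit Defensive.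
Import Order.TTheory GRing.Theory Num.Theory.
Local Open Scope ring_scope.

Definition binomZ (N K : int) : int :=
  if (0 <= K) && (K <= N) then ('C(`|N|%N, `|K|%N))%:Z else 0.

Definition F (a b : nat) (c : int) (t : nat) : int :=
  \sum_(j < (a + b).+1)
    (-1) ^+ j * ('C(a + b, j))%:Z *
    binomZ ((t.+1)%:Z * (b%:Z - j%:Z) + a%:Z + c - 1) ((a + b)%:Z - 1).

From mathcomp Require Import all_boot all_order all_algebra.
From mathcomp Require Import zify ring.
Set Implicit Arguments. Unset Strict Implicit. Unset Printing Implicit Defensive.
Import Order.TTheory GRing.Theory Num.Theory.
Local Open Scope ring_scope.

(* For a + b >= 1, F(a,b,c,t) is the inclusion-exclusion count of the ways to
   write c + t b as an ordered sum of a + b integers in [0, t], i.e. the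
   coefficient of x^(c + t b) in (1 + x + ... + x^t)^(a+b).  Both sides of this
   identification vanish at negative arguments and have the same backward
   differences, by induction on the number of parts.  Then (1) is the symmetry
   e |-> t n - e of these coefficients, (2) holds because c + t b is unchanged,
   and (3) is the recursion obtained by splitting off the last part. *)

Lemma binomZ_small (N K : int) : N < K -> binomZ N K = 0.
Proof. by move=> ltNK; rewrite /binomZ; case: ifP => // /andP[]; lia. Qed.

Lemma binomZ_nat (m k : nat) : binomZ m k = ('C(m, k))%:Z.
Proof. by rewrite /binomZ lez_nat le0z_nat /=; case: leqP => // ?; rewrite bin_small. Qed.

Lemma binomZS (N : int) (k : nat) :
  binomZ N k.+1 = binomZ (N - 1) k.+1 + binomZ (N - 1) k.
Proof.
case: N => [[|m]|m].
- by rewrite binomZ_nat !binomZ_small ?addr0 //; lia.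
- by rewrite (_ : Posz m.+1 - 1 = m) ?binomZ_nat ?binS ?PoszD //; lia.
- by rewrite !binomZ_small ?addr0 //; lia.
Qed.

Lemma binomZ0_sub (x : int) : binomZ x 0 - binomZ (x - 1) 0 = (x == 0)%:R.
Proof.
case: x => [[|m]|m].
- by rewrite binomZ_nat (binomZ_small (N := 0 - 1)).
- by rewrite (_ : Posz m.+1 - 1 = m) ?binomZ_nat ?bin0 ?subrr //; lia.
- by rewrite !binomZ_small.
Qed.

Lemma eq_from_backward_diff (R : zmodType) (f g : int -> R) :
    (forall e, e < 0 -> f e = 0) -> (forall e, e < 0 -> g e = 0) ->
    (forall e, f e - f (e - 1) = g e - g (e - 1)) ->
  f =1 g.
Proof.
move=> f_neg g_neg diff_fg [m|m]; last by rewrite f_neg ?g_neg.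
elim: m => [|m IHm].
  by have := diff_fg 0; rewrite (f_neg (0 - 1)) ?(g_neg (0 - 1)) // !subr0.
have := diff_fg m.+1; rewrite (_ : Posz m.+1 - 1 = m); last by lia.
by rewrite IHm; apply: addIr.
Qed.

Lemma big_ord_shift (R : nmodType) (f : nat -> R) (n : nat) : f n.+1 = 0 ->
  \sum_(j < n.+1) f j = f 0%N + \sum_(i < n.+1) f i.+1.
Proof. by move=> fn0; rewrite big_ord_recl big_ord_recr /= fn0 addr0. Qed.

(* bcomp t n e is the number of ways to write e as an ordered sum of n
   integers in [0, t]. *)
Fixpoint bcomp (t n : nat) (e : int) : int :=
  if n is n'.+1 then \sum_(i < t.+1) bcomp t n' (e - i%:Z) else (e == 0)%:R.

Lemma bcompS (t n : nat) (e : int) :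
  bcomp t n.+1 e = \sum_(i < t.+1) bcomp t n (e - i%:Z).
Proof. by []. Qed.

Lemma bcomp_neg (t n : nat) (e : int) : e < 0 -> bcomp t n e = 0.
Proof.
elim: n e => [|n IHn] e e_neg /=; first by rewrite (negbTE (ltr0_neq0 e_neg)).
by apply: big1 => i _; apply: IHn; lia.
Qed.

(* The window [e - t, e] slides to [e - t - 1, e - 1]. *)
Lemma bcompS_sub (t n : nat) (e : int) :
  bcomp t n.+1 e - bcomp t n.+1 (e - 1) = bcomp t n e - bcomp t n (e - t.+1%:Z).
Proof.
rewrite /= big_ord_recl big_ord_recr /= subr0.
rewrite (_ : \sum_(i < t) bcomp t n (e - (bump 0 i)%:Z) =
             \sum_(i < t) bcomp t n (e - 1 - (widen_ord (leqnSn t) i)%:Z)).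
  by rewrite (_ : e - 1 - t%:Z = e - t.+1%:Z) ?opprD ?addrA ?addrK //; lia.
by apply: eq_bigr => i _; congr bcomp; rewrite /bump /=; lia.
Qed.

Lemma bcomp_sym (t n : nat) (e : int) : bcomp t n e = bcomp t n (t%:Z * n%:Z - e).
Proof.
elim: n e => [|n IHn] e /=; first by rewrite mulr0 sub0r oppr_eq0.
rewrite (reindex_inj rev_ord_inj) /=; apply: eq_bigr => i _.
by rewrite IHn; congr bcomp; have := ltn_ord i; lia.
Qed.

Definition incl_excl (t k : nat) (e : int) : int :=
  \sum_(j < k.+2) (-1) ^+ j * ('C(k.+1, j))%:Z *
    binomZ (e + k%:Z - t.+1%:Z * j%:Z) k%:Z.

Lemma incl_excl_neg (t k : nat) (e : int) : e < 0 -> incl_excl t k e = 0.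
Proof. by move=> e_neg; apply: big1 => j _; rewrite binomZ_small ?mulr0 //; lia. Qed.

Lemma incl_excl0_sub (t : nat) (e : int) :
  incl_excl t 0 e - incl_excl t 0 (e - 1) = bcomp t 0 e - bcomp t 0 (e - t.+1%:Z).
Proof.
rewrite /incl_excl !big_ord_recr !big_ord0 /= !add0r !bin1 !bin0 !expr1 !expr0.
rewrite !mul1r !addr0 !mulr0 !subr0 !mulr1 !mulN1r.
rewrite (_ : e - 1 - t.+1%:Z = e - t.+1%:Z - 1); last by lia.
by rewrite -!binomZ0_sub; ring.
Qed.

(* Pascal's rule in the upper index, followed by Pascal's rule in 'C(k.+2, j). *)
Lemma incl_exclS_sub (t k : nat) (e : int) :
  incl_excl t k.+1 e - incl_excl t k.+1 (e - 1) =
  incl_excl t k e - incl_excl t k (e - t.+1%:Z).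
Proof.
pose B (j : nat) := binomZ (e + k%:Z - t.+1%:Z * j%:Z) k%:Z.
have pascal_upper : incl_excl t k.+1 e = incl_excl t k.+1 (e - 1) +
    \sum_(j < k.+3) (-1) ^+ j * ('C(k.+2, j))%:Z * B j.
  rewrite /incl_excl -big_split; apply: eq_bigr => j _ /=.
  by rewrite -mulrDr binomZS; congr (_ * (binomZ _ _ + binomZ _ _)); lia.
have shifted : incl_excl t k (e - t.+1%:Z) =
    \sum_(j < k.+2) (-1) ^+ j * ('C(k.+1, j))%:Z * B j.+1.
  by apply: eq_bigr => j _; congr (_ * binomZ _ _); lia.
rewrite pascal_upper addrAC subrr add0r shifted.
rewrite (@big_ord_shift _ (fun j => (-1) ^+ j * ('C(k.+2, j))%:Z * B j)); last first.
  by rewrite bin_small ?mulr0 ?mul0r.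
rewrite [incl_excl t k e](@big_ord_shift _ (fun j => (-1) ^+ j * ('C(k.+1, j))%:Z * B j));
  last by rewrite bin_small ?mulr0 ?mul0r.
rewrite /= !bin0 -addrA; congr (_ + _); rewrite -sumrB.
rewrite [LHS]big_ord_recr /= bin_small // mulr0 mul0r addr0.
by apply: eq_bigr => i _; rewrite binS PoszD exprS; ring.
Qed.

Lemma incl_exclE (t k : nat) : incl_excl t k =1 bcomp t k.+1.
Proof.
elim: k => [|k IHk]; apply: eq_from_backward_diff => e.
- exact: incl_excl_neg.
- exact: bcomp_neg.
- by rewrite incl_excl0_sub bcompS_sub.
- exact: incl_excl_neg.
- exact: bcomp_neg.
- by rewrite incl_exclS_sub bcompS_sub !IHk.
Qed.

Lemma F_bcomp (a b : nat) (c : int) (t : nat) :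
  (0 < a + b)%N -> F a b c t = bcomp t (a + b) (c + t%:Z * b%:Z).
Proof.
case def_n: (a + b)%N => [//|k] _.
rewrite -incl_exclE /F /incl_excl def_n; apply: eq_bigr => j _.
by congr (_ * binomZ _ _); lia.
Qed.

Theorem lemma4p1 (a b : nat) (c : int) (t : nat) :
  ((1 <= a + b)%N -> F a b c t = F b a (- c) t) /\
  ((1 <= b)%N -> F a b c t = F a.+1 b.-1 (c + t%:Z) t) /\
  ((1 <= a + b)%N -> F a.+1 b 0 t = \sum_(i < t.+1) F a b (- (i%:Z)) t).
Proof.
split; [|split] => pos.
- rewrite !F_bcomp ?[(b + a)%N]addnC // bcomp_sym; congr bcomp; lia.
- have ab_pos : (0 < a + b)%N by rewrite addn_gt0 pos orbT.
  rewrite !F_bcomp ?addSnnS ?prednK //; congr bcomp.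
  by rewrite -[in LHS](prednK pos) -addn1 PoszD; ring.
- rewrite F_bcomp // addSn bcompS; apply: eq_bigr => i _.
  by rewrite [RHS]F_bcomp // add0r addrC.
Qed.
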